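(* In the setting below, let $x=(z,Rj)\in Z_j$ with $j\in\mathbb N$ and let $i$ be an integer with $0\le i\le j$. Then there are a color $a\in A$ and an integer $M$ with $M+1\ge(j-i+1)/|A|$ such that $\operatorname{dist}_{T_a}(f_a(x),V_i^a)\ge M$, and moreover, for every $k\le i$ and every vertex $v\in V_k^a$ which is the lowest-level vertex of the geodesic segment from $f_a(x)$ to $v$ in $T_a$, we have $|f_a(x)v|\ge M$.
   Context: Setting: $Z$ is a bounded metric space with $\operatorname{diam}Z>0$, $\mu=\pi/\operatorname{diam}Z$, $A$ a set with $|A|=n+1$, and $\delta,\gamma\in(0,1)$, $\lambda\ge1$, $r\in(0,1)$ sufficiently small with $\lambda r<\delta$, $r<\operatorname{diam}Z$. $(\mathcal U_j)_{j\in\mathbb N}$ is a $\gamma$-separated characteristic sequence of open coverings of $Z$, each colored by $A$, $\mathcal U_j=\bigcup_{a\in A}\mathcal U_j^a$, with parameter $r$ and characteristic constants $\delta,\lambda$; that is: each $\mathcal U_j^a$ consists of pairwise disjoint open sets; (1) $\sup_{U\in\mathcal U_j}\operatorname{diam}U\le r^j$ and every ball of radius $\delta r^j$ in $Z$ is contained in some member of $\mathcal U_j$; (2) for every $a,j$ and $z\in Z$ there is $U\in\mathcal U_j^a$ with $\operatorname{dist}(z,U)\le\lambda r^j$; (3) for every $a$ and distinct $U\in\mathcal U_j^a$, $U'\in\mathcal U_{j'}^a$ with $j'\le j$, either $B_s(U)\cap U'=\emptyset$ or $B_s(U)\subset U'$, and if $j'<j$ there is $U''\in\mathcal U_j^a$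 with $B_s(U'')\subset U'$, where $s=\gamma r^j$ and $B_s(U)=\{z:\operatorname{dist}(z,U)<s\}$. Trees: put $\mathcal U_0^a=\{Z\}$. $T_a$ is the tree (edges of length $1$, path metric) with vertex set $V^a=\bigsqcup_{j\ge0}V_j^a$, where $V_j^a$ (vertices of level $j$) is in bijection with $\mathcal U_j^a$ (root $v_a$ corresponds to $Z$); $v\in V_j^a$, $v'\in V_{j'}^a$, $j'<j$, are joined by an edge iff the corresponding sets satisfy $U\subset U'$ and $j'$ is the maximal level $<j$ for which some member of $\mathcal U_{j'}^a$ contains $U$. Cone: $\operatorname{Co}(Z)=Z\times[0,\infty)/Z\times\{0\}$ with vertex $o$ and metric $|xx'|$ for $x=(z,t),x'=(z',t')$ equal to the length of the side $\bar x\bar x'$ of a triangle in $\mathrm H^2$ with sides $t,t'$ from $\bar o$ enclosing angle $\mu|zz'|$. Let $R=\ln(1/r)$, $Z_j=\{(z,jR):z\in Z\}$ for $j\ge1$, $Z_0=\{o\}$, $X=\bigcup_{j\ge0}Z_j$. Define $f_a:X\to T_a$ by $f_a(o)=v_a$ and, for $x=(z,jR)$, $j\ge1$, $f_a(x)$ is the vertex of $V_j^a$ corresponding to a (fixed choice of) member $U\in\mathcal U_j^a$ closest to $z$, i.e. minimizing $\operatorname{dist}(z,U)$. *)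

From HB Require Import structures.
From mathcomp Require Import all_boot all_order all_algebra.
From mathcomp Require Import classical_sets reals.
Set Implicit Arguments. Unset Strict Implicit. Unset Printing Implicit Defensive.
Import Order.TTheory GRing.Theory Num.Theory.
Local Open Scope classical_set_scope.
Local Open Scope ring_scope.

Section Metric.
Context {R : realType} {Z : Type} (d : Z -> Z -> R).

Definition is_metric : Prop :=
  [/\ (forall x y, 0 <= d x y), (forall x y, d x y = 0 <-> x = y),
      (forall x y, d x y = d y x) & (forall x y w, d x w <= d x y + d y w)].

Definition mbounded : Prop := exists B : R, forall x y, d x y <= B.

Definition diam_space : R := sup [set d p.1 p.2 | p in [set: Z * Z]].

Definition mball (z : Z) (s : R) : set Z := [set w | d z w < s].

Definition mopen (U : set Z) : Prop :=
  forall u, U u -> exists e : R, 0 < e /\ mball u e `<=` U.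

Definition dist_to (z : Z) (U : set Z) : R := inf [set d z u | u in U].

Definition nbhd (s : R) (U : set Z) : set Z := [set w | dist_to w U < s].

Definition diam_le (U : set Z) (c : R) : Prop :=
  forall u v, U u -> U v -> d u v <= c.

Context {A : finType}.

(* Ucov j a = U_j^a, meaningful for j >= 1. *)
Definition char_seq (delta gamma lambda r : R)
    (Ucov : nat -> A -> set (set Z)) : Prop :=
  (forall j a U, (1 <= j)%N -> Ucov j a U -> mopen U /\ U !=set0) /\
  (forall j z, (1 <= j)%N -> exists a U, Ucov j a U /\ U z) /\
  (forall j a U U', (1 <= j)%N -> Ucov j a U -> Ucov j a U' -> U <> U' ->
     U `&` U' = set0) /\
  (forall j a U, (1 <= j)%N -> Ucov j a U -> diam_le U (r ^+ j)) /\
  (forall j z, (1 <= j)%N ->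
     exists a U, Ucov j a U /\ mball z (delta * r ^+ j) `<=` U) /\
  (forall j a z, (1 <= j)%N ->
     exists U, Ucov j a U /\ dist_to z U <= lambda * r ^+ j) /\
  (* (3) with s = gamma r^j *)
  (forall a j j' U U', (1 <= j')%N -> (j' <= j)%N ->
     Ucov j a U -> Ucov j' a U' -> ((j' < j)%N \/ U <> U') ->
     (nbhd (gamma * r ^+ j) U `&` U' = set0 \/
      nbhd (gamma * r ^+ j) U `<=` U')) /\
  (forall a j j' U', (1 <= j')%N -> (j' < j)%N -> Ucov j' a U' ->
     exists U'', Ucov j a U'' /\ nbhd (gamma * r ^+ j) U'' `<=` U').

Definition closest_choice (Ucov : nat -> A -> set (set Z))
    (f : A -> Z -> nat -> set Z) : Prop :=
  forall a z j, (1 <= j)%N ->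
    Ucov j a (f a z j) /\
    (forall U, Ucov j a U -> dist_to z (f a z j) <= dist_to z U).

End Metric.

Section Tree.
Context {Z : Type} {A : finType} (Ucov : nat -> A -> set (set Z)) (a : A).

Definition Ulev (j : nat) : set (set Z) :=
  if j == 0%N then [set setT] else Ucov j a.

(* vertices of T_a: pairs (level j, member U of U_j^a) *)
Definition tvert (v : nat * set Z) : Prop := Ulev v.1 v.2.

Definition tparent (v w : nat * set Z) : Prop :=
  [/\ tvert v, tvert w, (w.1 < v.1)%N, v.2 `<=` w.2 &
      forall l, (w.1 < l < v.1)%N -> ~ (exists U, Ulev l U /\ v.2 `<=` U)].

Definition tadj (v w : nat * set Z) : Prop := tparent v w \/ tparent w v.

Fixpoint twalk (x : nat * set Z) (s : seq (nat * set Z)) : Prop :=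
  match s with
  | [::] => tvert x
  | y :: s' => tadj x y /\ twalk y s'
  end.

Definition tgeodesic (x : nat * set Z) (s : seq (nat * set Z)) : Prop :=
  twalk x s /\
  forall s', twalk x s' -> last x s' = last x s -> (size s <= size s')%N.

End Tree.

Fixpoint levels_ge {Z : Type} (k : nat) (x : nat * set Z) (s : seq (nat * set Z)) : Prop :=
  (k <= x.1)%N /\ match s with [::] => True | y :: s' => levels_ge k y s' end.

(* For each level l with i < l <= j, the ball of radius delta r^l about z lies in a
   member of U_l^b for some color b, and for r small f_b(x) lies in that ball, so in
   T_b the vertex f_b(x) descends from a level-l vertex.  By pigeonhole one color a
   does this for at least (j - i)/|A| levels.  A walk in T_a from f_a(x) to a vertex
   of level <= i must leave all these subtrees, and a single edge leaves the
   subtrees of at most one level, namely the level of the vertex it starts from. *)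
From HB Require Import structures.
From mathcomp Require Import all_boot all_order all_algebra.
From mathcomp Require Import boolp classical_sets reals.
From mathcomp Require Import zify lra.
Set Implicit Arguments. Unset Strict Implicit. Unset Printing Implicit Defensive.
Import Order.TTheory GRing.Theory Num.Theory.
Local Open Scope classical_set_scope.
Local Open Scope ring_scope.

Section Distance.
Context {R : realType} {Z : Type} (d : Z -> Z -> R).
Hypothesis d_metric : is_metric d.

Lemma has_inf_dist_to z (U : set Z) : U !=set0 -> has_inf [set d z u | u in U].
Proof.
case: d_metric => d_ge0 _ _ _ [u Uu]; split; first by exists (d z u), u.
by exists 0 => _ [w _ <-]; exact: d_ge0.
Qed.

Lemma dist_to_le0 z (U : set Z) : U z -> dist_to d z U <= 0.
Proof.
move=> Uz; case: d_metric => d_ge0 d_eq0 _ _.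
rewrite -[0](proj2 (d_eq0 z z) erefl) /dist_to; apply: ge_inf; last by exists z.
by exists 0 => _ [w _ <-]; exact: d_ge0.
Qed.

Lemma sub_nbhd (s : R) (U : set Z) : 0 < s -> U `<=` nbhd d s U.
Proof. by move=> s_gt0 u Uu; apply: le_lt_trans (dist_to_le0 Uu) s_gt0. Qed.

Lemma sub_mball_dist_to z (U : set Z) (c rho : R) : U !=set0 -> diam_le d U c ->
  dist_to d z U + c < rho -> U `<=` mball d z rho.
Proof.
move=> U_ne diamU lt_rho u Uu; case: d_metric => _ _ _ d_tri.
have e_gt0 : 0 < rho - dist_to d z U - c by lra.
have [_ [w Uw <-] dzw] := inf_adherent e_gt0 (has_inf_dist_to z U_ne).
have := diamU _ _ Uw Uu; have := d_tri z w u; rewrite /mball /=.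
by move: dzw; rewrite -/(dist_to d z U); lra.
Qed.

End Distance.

Lemma mul_exprn_lt (R : numDomainType) (c e r : R) (l j : nat) :
  0 <= c -> 0 < r -> r <= 1 -> c * r < e -> (l < j)%N -> c * r ^+ j < e * r ^+ l.
Proof.
move=> c_ge0 r_gt0 r_le1 cr_lt lt_lj.
have rj_le : r ^+ j <= r ^+ l.+1 by apply: ler_wiXn2l => //; exact: ltW.
apply: (le_lt_trans (ler_wpM2l c_ge0 rj_le)).
by rewrite exprS mulrA ltr_pM2r // exprn_gt0.
Qed.

Lemma size_le_sum_count (I : finType) (T : eqType) (P : I -> pred T) (s : seq T) :
  {in s, forall x, exists b, P b x} -> (size s <= \sum_(b : I) count (P b) s)%N.
Proof.
elim: s => //= x s IH Ps; rewrite big_split /= -add1n.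
have [b Pbx] := Ps x (mem_head _ _).
apply: leq_add; first by rewrite (bigD1 b) //= Pbx.
by apply: IH => y ys; apply: Ps; rewrite inE ys orbT.
Qed.

Lemma pigeonhole_count (I : finType) (T : eqType) (P : I -> pred T) (s : seq T) :
  (0 < #|I|)%N -> {in s, forall x, exists b, P b x} ->
  exists a, (size s <= #|I| * count (P a) s)%N.
Proof.
move=> I_gt0 Ps; have [a max_a] := bigop.eq_bigmax (fun b => count (P b) s) I_gt0.
exists a; apply: (leq_trans (size_le_sum_count Ps)).
rewrite -max_a -sum_nat_const; apply: leq_sum => b _.
exact: (bigop.leq_bigmax b).
Qed.

Section Tree.
Context {Z : Type} {A : finType} (Ucov : nat -> A -> set (set Z)) (a : A).

(* [below_level l v]: v lies in the subtree of T_a rooted at some level-l vertex. *)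
Definition below_level (l : nat) (v : nat * set Z) : bool :=
  `[< (l <= v.1)%N /\ exists W, Ulev Ucov a l W /\ v.2 `<=` W >].

Lemma Ulev_pos l : (1 <= l)%N -> Ulev Ucov a l = Ucov l a.
Proof. by rewrite /Ulev; case: l. Qed.

Lemma below_level_member l U : (1 <= l)%N -> Ucov l a U -> below_level l (l, U).
Proof. by move=> l_ge1 UU; apply/asboolP; split=> //; exists U; split; rewrite ?Ulev_pos. Qed.

Hypothesis member_nonempty : forall l U, (1 <= l)%N -> Ucov l a U -> U !=set0.
Hypothesis member_nested : forall l l' U W, (1 <= l <= l')%N ->
  Ucov l' a U -> Ucov l a W -> U `&` W !=set0 -> U `<=` W.

Lemma below_level_adj l x y : tadj Ucov a x y ->
  below_level l x -> below_level l y || (l == x.1).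
Proof.
move=> [[x_vert y_vert lt_yx sub_xy no_between]|[_ _ lt_xy sub_yx _]];
  move=> /asboolP[le_lx [W [W_lev sub_xW]]].
  have [->|ne_lx] := eqVneq l x.1; first by rewrite orbT.
  have lt_lx : (l < x.1)%N by rewrite ltn_neqAle ne_lx.
  have le_ly : (l <= y.1)%N.
    by rewrite leqNgt; apply/negP => lt_yl; apply: (no_between l); [rewrite lt_yl | exists W].
  apply/orP; left; apply/asboolP; split=> //; exists W; split=> //.
  case: l => [|l] in le_lx lt_lx le_ly ne_lx W_lev sub_xW *.
    by move: W_lev; rewrite /Ulev /= => ->.
  rewrite Ulev_pos // in W_lev; rewrite /tvert Ulev_pos ?(leq_trans _ le_ly) // in y_vert.
  rewrite /tvert Ulev_pos ?(ltn_trans _ lt_lx) // in x_vert.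
  have [p xp] := member_nonempty (ltn_trans (ltn0Sn l) lt_lx) x_vert.
  by apply: (member_nested _ y_vert W_lev); [rewrite le_ly | exists p; split; auto].
apply/orP; left; apply/asboolP; split; first exact: leq_trans le_lx (ltnW lt_xy).
by exists W; split=> //; exact: subset_trans sub_yx sub_xW.
Qed.

Lemma count_below_level_walk (S : seq nat) x s : uniq S -> twalk Ucov a x s ->
  (count (below_level^~ x) S <= size s + count (below_level^~ (last x s)) S)%N.
Proof.
move=> S_uniq; elim: s x => [|y s IH] x /=; first by rewrite add0n.
move=> [adj_xy walk_y].
have step : (count (below_level^~ x) S <= (count (below_level^~ y) S).+1)%N.
  apply: (@leq_trans (count (predU (below_level^~ y) (pred1 x.1)) S)).
    by apply: sub_count => l /(below_level_adj adj_xy).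
  have := count_predUI (below_level^~ y) (pred1 x.1) S.
  by rewrite count_uniq_mem //; have := leq_b1 (x.1 \in S); lia.
by move: step (IH y walk_y); lia.
Qed.

Lemma count_below_level_le_size (S : seq nat) x s : uniq S ->
  {in S, forall l, ((last x s).1 < l)%N} -> twalk Ucov a x s ->
  (count (below_level^~ x) S <= size s)%N.
Proof.
move=> S_uniq S_above walk_s; apply: leq_trans (count_below_level_walk S_uniq walk_s) _.
rewrite (@eq_in_count _ _ pred0) ?count_pred0 ?addn0 // => l /S_above lt_l.
by apply/negbTE/asboolP => -[le_l _]; move: lt_l; rewrite ltnNge le_l.
Qed.

End Tree.

Section CharacteristicSequence.
Variables (R : realType) (Z : Type) (d : Z -> Z -> R) (A : finType).
Variables (delta gamma lambda r : R) (Ucov : nat -> A -> set (set Z)).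
Hypothesis d_metric : is_metric d.
Hypothesis Ucov_char : char_seq d delta gamma lambda r Ucov.
Hypothesis gamma_gt0 : 0 < gamma.
Hypothesis r_gt0 : 0 < r.

Lemma char_member_nonempty a l U : (1 <= l)%N -> Ucov l a U -> U !=set0.
Proof. by case: Ucov_char => open_ne _ l_ge1 UU; case: (open_ne l a U l_ge1 UU). Qed.

(* Property (3) also covers two sets of the same level. *)
Lemma char_member_nested a : forall l l' U W, (1 <= l <= l')%N ->
  Ucov l' a U -> Ucov l a W -> U `&` W !=set0 -> U `<=` W.
Proof.
move=> l l' U W /andP[l_ge1 le_ll'] UU WW [p [Up Wp]].
have [->|ne_UW] := pselect (U = W); first by [].
have s_gt0 : 0 < gamma * r ^+ l' by rewrite mulr_gt0 // exprn_gt0.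
case: Ucov_char => _ [_ [_ [_ [_ [_ [separated _]]]]]].
case: (separated a l' l U W l_ge1 le_ll' UU WW (or_intror ne_UW)) => [disj|sub].
  have : (nbhd d (gamma * r ^+ l') U `&` W) p.
    by split=> //; exact: (sub_nbhd d_metric s_gt0).
  by rewrite disj.
by move=> u Uu; apply/sub/(sub_nbhd d_metric s_gt0).
Qed.

Variable f : A -> Z -> nat -> set Z.
Hypothesis f_closest : closest_choice d Ucov f.
Hypothesis lambda_ge0 : 0 <= lambda.
Hypothesis r_le1 : r <= 1.
Hypothesis r_small : (lambda + 1) * r < delta.

(* f_a(x) has diameter <= r^j and lies within lambda r^j of z by (2). *)
Lemma closest_sub_mball a z j l : (1 <= l)%N -> (l < j)%N ->
  f a z j `<=` mball d z (delta * r ^+ l).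
Proof.
move=> l_ge1 lt_lj; have j_ge1 : (1 <= j)%N := leq_trans l_ge1 (ltnW lt_lj).
case: Ucov_char => _ [_ [_ [diam_le_r [_ [near _]]]]].
have [f_mem f_min] := f_closest a z j_ge1.
have [U [UU dist_U]] := near j a z j_ge1.
apply: (sub_mball_dist_to d_metric (char_member_nonempty j_ge1 f_mem)).
  exact: diam_le_r f_mem.
have := mul_exprn_lt (addr_ge0 lambda_ge0 ler01) r_gt0 r_le1 r_small lt_lj.
have := f_min U UU; lra.
Qed.

Lemma exists_below_level_closest z j l : (0 < #|A|)%N -> (1 <= l <= j)%N ->
  exists a, below_level Ucov a l (j, f a z j).
Proof.
move=> A_gt0 /andP[l_ge1 le_lj]; have j_ge1 := leq_trans l_ge1 le_lj.
have [lt_lj|le_jl] := ltnP l j; last first.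
  have /card_gt0P[a _] := A_gt0; exists a.
  have -> : l = j by apply/eqP; rewrite eqn_leq le_lj le_jl.
  exact: below_level_member j_ge1 (f_closest a z j_ge1).1.
case: Ucov_char => _ [_ [_ [_ [ball_sub _]]]].
have [b [W [WW ball_W]]] := ball_sub l z l_ge1.
exists b; apply/asboolP; split; first exact: ltnW.
exists W; split; first by rewrite Ulev_pos.
by apply: subset_trans ball_W; exact: closest_sub_mball.
Qed.

Lemma exists_color_walks_long z j i : (0 < #|A|)%N -> (1 <= j)%N -> (i <= j)%N ->
  exists a (n : nat), (j - i <= #|A| * n)%N /\
  forall s, twalk Ucov a (j, f a z j) s -> ((last (j, f a z j) s).1 <= i)%N ->
    (n <= size s)%N.
Proof.
move=> A_gt0 j_ge1 le_ij; pose levels := iota i.+1 (j - i).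
pose seen b l := below_level Ucov b l (j, f b z j).
have levels_seen : {in levels, forall l, exists b, seen b l}.
  move=> l; rewrite mem_iota => /andP[lt_il lt_lj].
  by apply: exists_below_level_closest A_gt0 _; lia.
have [a count_a] := @pigeonhole_count A nat seen levels A_gt0 levels_seen.
exists a, (count (seen a) levels); split.
  by rewrite -(size_iota i.+1 (j - i)).
move=> s walk_s last_le.
apply: (count_below_level_le_size (@char_member_nonempty a)
                                  (@char_member_nested a) (iota_uniq _ _) _ walk_s).
by move=> l; rewrite mem_iota => /andP[lt_il _]; exact: leq_ltn_trans last_le lt_il.
Qed.

End CharacteristicSequence.

Theorem lemma3p5 (R : realType) (A : finType) (delta gamma lambda : R) :
  (0 < #|A|)%N -> 0 < delta < 1 -> 0 < gamma < 1 -> 1 <= lambda ->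
  exists r0 : R, 0 < r0 /\
  forall r : R, 0 < r < r0 -> lambda * r < delta ->
  forall (Z : Type) (d : Z -> Z -> R),
    is_metric d -> mbounded d -> 0 < diam_space d -> r < diam_space d ->
  forall Ucov : nat -> A -> set (set Z),
    char_seq d delta gamma lambda r Ucov ->
  forall f : A -> Z -> nat -> set Z, closest_choice d Ucov f ->
  forall (z : Z) (j i : nat), (1 <= j)%N -> (i <= j)%N ->
  exists (a : A) (M : int),
    ((j - i + 1)%:R / #|A|%:R <= (M + 1)%:~R :> R) /\
    (* dist_{T_a}(f_a(x), V_i^a) >= M *)
    (forall v, tvert Ucov a v -> v.1 = i ->
       forall s, twalk Ucov a (j, f a z j) s -> last (j, f a z j) s = v ->
       (M <= (size s)%:Z)%R) /\
    (* |f_a(x) v| >= M when v in V_k^a (k <= i) is lowest on the geodesic *)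
    (forall k, (k <= i)%N -> forall v, tvert Ucov a v -> v.1 = k ->
       forall s, tgeodesic Ucov a (j, f a z j) s -> last (j, f a z j) s = v ->
       levels_ge k (j, f a z j) s ->
       (M <= (size s)%:Z)%R).
Proof.
move=> A_gt0 /andP[delta_gt0 delta_lt1] /andP[gamma_gt0 _] lambda_ge1.
have lambda1_gt0 : 0 < lambda + 1 by lra.
exists (delta / (lambda + 1)); split; first by rewrite divr_gt0.
move=> r /andP[r_gt0 lt_r_r0] _ Z d d_metric _ _ _ Ucov Ucov_char f f_closest z j i j_ge1 le_ij.
have r_small : (lambda + 1) * r < delta by rewrite mulrC -ltr_pdivlMr.
have r_le1 : r <= 1 by nra.
have [|a [n [bound walks_long]]] := exists_color_walks_long d_metric Ucov_char
  gamma_gt0 r_gt0 f_closest _ r_le1 r_small z A_gt0 j_ge1 le_ij; first by lra.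
exists a, n; split; [|split].
- rewrite ler_pdivrMr ?ltr0n // -PoszD -pmulrn -natrM ler_nat.
  by move: bound A_gt0; move: #|A| => m; nia.
- move=> v _ v_lev s walk_s last_v; rewrite lez_nat.
  by apply: walks_long walk_s _; rewrite last_v v_lev.
- move=> k le_ki v _ v_lev s [walk_s _] last_v _; rewrite lez_nat.
  by apply: walks_long walk_s _; rewrite last_v v_lev.
Qed.
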